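(* Let $r\ge1$. For any $\gamma\in\mathrm{GL}_r(F_\infty)$ there exist positive constants $c_1,c_2,c_3$ such that for every $\omega\in\Omega^r$: (a) $h(\omega)\le c_1|j(\gamma,\omega)|\,|\omega|^{-1}\le1$; (b) $|\gamma(\omega)|\le c_2\,h(\omega)^{-1}$; (c) $h(\gamma(\omega))\ge c_3\,h(\omega)$.
   Context: Let $F$ be a global function field, $\infty$ a place, $F_\infty$ the completion at $\infty$, $\mathbb{C}_\infty$ the completion of an algebraic closure of $F_\infty$ with absolute value $|\cdot|$. Fix $\xi\in\mathbb{C}_\infty^\times$. $\Omega^r$ is the set of column vectors $\omega=(\omega_1,\dots,\omega_r)^T\in\mathbb{C}_\infty^r$ with $F_\infty$-linearly independent entries and $\omega_r=\xi$. For $\gamma\in\mathrm{GL}_r(F_\infty)$: $j(\gamma,\omega):=\xi^{-1}\cdot(\text{last entry of }\gamma\omega)$ and $\gamma(\omega):=j(\gamma,\omega)^{-1}\gamma\omega\in\Omega^r$. A linear form $F_\infty^r\to F_\infty$ is unimodular if its largest coefficient has absolute value $1$. Put $|\omega|:=\max_i|\omega_i|$ and $h(\omega):=|\omega|^{-1}\inf\{|\ell(\omega)|:\ell$ a unimodular $F_\infty$-linear form$\}$. *)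

From HB Require Import structures.
From mathcomp Require Import all_boot all_order all_algebra.
From mathcomp Require Import classical_sets reals.
Set Implicit Arguments. Unset Strict Implicit. Unset Printing Implicit Defensive.
Import Order.TTheory GRing.Theory Num.Theory.
Local Open Scope ring_scope.

(* Setting:  K plays the role of F_oo, C the role of C_oo, with
   iota : K -> C the inclusion F_oo \subset C_oo, and abs : C -> R the
   (non-archimedean) absolute value of C_oo; the absolute value of F_oo is
   abs \o iota. *)

Definition cauchy_seq (R : realType) (T : zmodType) (a : T -> R) (u : nat -> T) :=
  forall e : R, 0 < e -> exists N : nat, forall m k : nat,
    (N <= m)%N -> (N <= k)%N -> a (u m - u k) < e.

Definition converges_to (R : realType) (T : zmodType) (a : T -> R) (u : nat -> T) (l : T) :=
  forall e : R, 0 < e -> exists N : nat, forall m : nat, (N <= m)%N -> a (u m - l) < e.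

(* Hypotheses: (K, abs \o iota) is a local field of positive characteristic
   (equivalently: the completion F_oo of a global function field F at a place),
   and C is algebraically closed, complete, and contains the algebraic
   closure of K as a dense subset (i.e. C is the completion of an algebraic
   closure of K). *)
Record function_field_setting (R : realType) (K : fieldType)
    (C : closedFieldType) (iota : {rmorphism K -> C}) (abs : C -> R) : Prop := {
  abs_ge0 : forall x, 0 <= abs x;
  abs_eq0 : forall x, (abs x = 0) <-> (x = 0);
  abs_mul : forall x y, abs (x * y) = abs x * abs y;
  abs_ultra : forall x y, abs (x + y) <= Num.max (abs x) (abs y);
  K_pchar : exists p : nat, prime p /\ p \in [pchar K];
  K_discrete : exists pi : K, 0 < abs (iota pi) < 1 /\
      forall x : K, x != 0 -> exists z : int, abs (iota x) = abs (iota pi) ^ z;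
  K_finite_residue : exists s : seq K, forall x : K, abs (iota x) <= 1 ->
      exists2 a, a \in s & abs (iota (x - a)) < 1;
  K_complete : forall u : nat -> K, cauchy_seq (fun x => abs (iota x)) u ->
      exists l : K, converges_to (fun x => abs (iota x)) u l;
  C_complete : forall u : nat -> C, cauchy_seq abs u ->
      exists l : C, converges_to abs u l;
  C_alg_dense : forall (x : C) (e : R), 0 < e -> exists y : C,
      abs (x - y) < e /\ exists p : {poly K}, p != 0 /\ root (map_poly iota p) y
}.

Section Defs.
Variables (R : realType) (K : fieldType) (C : closedFieldType).
Variables (iota : {rmorphism K -> C}) (abs : C -> R) (xi : C).

Definition normv (m : nat) (omega : 'cV[C]_m) : R :=
  \big[Num.max/0]_(i < m) abs (omega i 0).

Definition lform (m : nat) (l : 'rV[K]_m) (omega : 'cV[C]_m) : C :=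
  \sum_(i < m) iota (l 0 i) * omega i 0.

Definition unimodular (m : nat) (l : 'rV[K]_m) : Prop :=
  \big[Num.max/0]_(i < m) abs (iota (l 0 i)) = 1.

Definition hgt (m : nat) (omega : 'cV[C]_m) : R :=
  (normv omega)^-1 *
  inf [set y : R | exists l : 'rV[K]_m, unimodular l /\ y = abs (lform l omega)].

(* Omega^r, r = n.+1 : entries F_oo-linearly independent, last entry xi *)
Definition Omega (n : nat) (omega : 'cV[C]_n.+1) : Prop :=
  omega ord_max 0 = xi /\
  forall a : 'rV[K]_n.+1, lform a omega = 0 -> a = 0.

Definition jfac (n : nat) (gamma : 'M[K]_n.+1) (omega : 'cV[C]_n.+1) : C :=
  xi^-1 * (map_mx iota gamma *m omega) ord_max 0.

Definition gact (n : nat) (gamma : 'M[K]_n.+1) (omega : 'cV[C]_n.+1) : 'cV[C]_n.+1 :=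
  (jfac gamma omega)^-1 *: (map_mx iota gamma *m omega).

End Defs.

From HB Require Import structures.
From mathcomp Require Import all_boot all_order all_algebra.
From mathcomp Require Import classical_sets reals boolp.
From mathcomp Require Import ring lra.
Set Implicit Arguments. Unset Strict Implicit. Unset Printing Implicit Defensive.
Import Order.TTheory GRing.Theory Num.Theory.
Local Open Scope ring_scope.

(* Write |l| for the largest absolute value of a coefficient of the linear form l.  The
   ultrametric inequality gives |l(w)| <= |l| |w|.  Conversely, if the entries of w are
   linearly independent over the complete field K, then |l| <= M |l(w)| for some M > 0, so
   the infimum defining h(w) is positive.  This is proved by induction on the number k of
   coordinates l may involve: by the induction hypothesis a Cauchy sequence in the span of
   w_0, ..., w_(k-1) has Cauchy coefficients, which converge in K, so this span is closed
   and w_k lies at a positive distance d from it; writing l = a + t e_k, the distance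
   bounds |t| and the induction hypothesis bounds a.
   Since j(gamma, w) is xi^-1 l(w) for the last row l of gamma, these two inequalities give
   (a); (b) and (c) follow by controlling gamma w and l gamma through the largest entries of
   gamma and gamma^-1. *)

Record ultrametric_abs (R : realType) (C : nzRingType) (abs : C -> R) : Prop := {
  absu_ge0 : forall x, 0 <= abs x;
  absu_eq0 : forall x, abs x = 0 <-> x = 0;
  absuM : forall x y, abs (x * y) = abs x * abs y;
  absuD : forall x y, abs (x + y) <= Num.max (abs x) (abs y) }.

Lemma setting_ultrametric (R : realType) (K : fieldType) (C : closedFieldType)
    (iota : {rmorphism K -> C}) (abs : C -> R) :
  function_field_setting iota abs -> ultrametric_abs abs.
Proof. by case. Qed.

Lemma inv_succ_lt_eventually (R : archiRealFieldType) (e : R) : 0 < e ->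
  exists N, forall j, (N <= j)%N -> (j.+1%:R)^-1 < e.
Proof.
move=> e_gt0; exists (Num.bound e^-1) => j le_Nj.
rewrite -[e]invrK ltf_pV2 ?posrE ?invr_gt0 ?ltr0Sn //.
apply: lt_le_trans (archi_boundP _) _; first by rewrite invr_ge0 ltW.
by rewrite ler_nat (leq_trans le_Nj).
Qed.

Lemma row_unitmx_neq0 (F : fieldType) n (A : 'M[F]_n) i : A \in unitmx -> row i A != 0.
Proof.
move=> A_unit; apply/eqP => rowi0; have := row_mul i A (invmx A).
rewrite mulmxV // rowi0 mul0mx => /rowP/(_ i).
by rewrite !mxE eqxx => /eqP; rewrite oner_eq0.
Qed.

Section UltrametricAbs.
Variables (R : realType) (C : fieldType) (abs : C -> R).
Hypothesis habs : ultrametric_abs abs.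
Let abs_ge0 := absu_ge0 habs.

Lemma abs0 : abs 0 = 0. Proof. exact/(absu_eq0 habs). Qed.

Lemma abs_gt0 x : (0 < abs x) = (x != 0).
Proof.
apply/idP/idP => [|x_neq0]; first by apply: contraTneq => ->; rewrite abs0 ltxx.
by rewrite lt0r abs_ge0 andbT; apply: contra x_neq0 => /eqP/(absu_eq0 habs)->.
Qed.

Lemma abs1 : abs 1 = 1.
Proof.
have abs1_neq0 : abs 1 != 0 by rewrite gt_eqF // abs_gt0 oner_neq0.
by apply: (mulfI abs1_neq0); rewrite -(absuM habs) !mulr1.
Qed.

Lemma absN x : abs (- x) = abs x.
Proof.
have absN1 : abs (-1) = 1.
  have := absuM habs (-1) (-1); rewrite mulrNN mulr1 abs1.
  by have := abs_ge0 (-1); nra.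
by rewrite -mulN1r (absuM habs) absN1 mul1r.
Qed.

Lemma absV x : abs x^-1 = (abs x)^-1.
Proof.
have [->|x_neq0] := eqVneq x 0; first by rewrite invr0 abs0 invr0.
have absx_neq0 : abs x != 0 by rewrite gt_eqF // abs_gt0.
by apply: (mulfI absx_neq0); rewrite -(absuM habs) !mulfV // abs1.
Qed.

Lemma absB x y : abs (x - y) <= Num.max (abs x) (abs y).
Proof. by rewrite -(absN y) absuD. Qed.

Lemma abs_sum_le (I : Type) (r : seq I) (F : I -> C) :
  abs (\sum_(i <- r) F i) <= \big[Num.max/0]_(i <- r) abs (F i).
Proof.
elim/big_ind2: _ => [|x1 y1 x2 y2 le1 le2|//]; first by rewrite abs0.
by apply: le_trans (absuD habs _ _) _; rewrite ge_max !le_max le1 le2 orbT.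
Qed.

Lemma abs_lt_all_eq0 x : (forall e : R, 0 < e -> abs x < e) -> x = 0.
Proof.
move=> small; apply/eqP; rewrite -[_ == _]negbK -abs_gt0; apply/negP => absx_gt0.
by have := small _ absx_gt0; rewrite ltxx.
Qed.

Lemma converges_cauchy (u : nat -> C) z : converges_to abs u z -> cauchy_seq abs u.
Proof.
move=> cvg_uz e e_gt0; have [N cvgN] := cvg_uz e e_gt0.
exists N => i j le_Ni le_Nj.
have -> : u i - u j = (u i - z) - (u j - z) by ring.
by apply: le_lt_trans (absB _ _) _; rewrite gt_max !cvgN.
Qed.

Lemma converges_to_unique (u : nat -> C) z z' :
  converges_to abs u z -> converges_to abs u z' -> z = z'.
Proof.
move=> cvg_z cvg_z'; apply/subr0_eq/abs_lt_all_eq0.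
move=> e e_gt0; have [N cvgN] := cvg_z e e_gt0; have [N' cvgN'] := cvg_z' e e_gt0.
have -> : z - z' = (u (maxn N N') - z') - (u (maxn N N') - z) by ring.
by apply: le_lt_trans (absB _ _) _; rewrite gt_max cvgN ?cvgN' ?leq_maxl ?leq_maxr.
Qed.

End UltrametricAbs.

Section Forms.
Variables (R : realType) (K : fieldType) (C : closedFieldType).
Variables (iota : {rmorphism K -> C}) (abs : C -> R).
Hypothesis habs : ultrametric_abs abs.
Let abs_ge0 := absu_ge0 habs.
Let absM := absuM habs.

Local Notation normv := (normv abs).
Local Notation lform := (lform iota).
Local Notation unimodular := (unimodular iota abs).

Definition normf m (l : 'rV[K]_m) : R := \big[Num.max/0]_(i < m) abs (iota (l 0 i)).
Arguments normf {m}.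

Definition normm m n (A : 'M[K]_(m, n)) : R := \big[Num.max/0]_(i < m) normf (row i A).

Definition inf_unimod m (w : 'cV[C]_m) : R :=
  inf [set y : R | exists l : 'rV[K]_m, unimodular l /\ y = abs (lform l w)]%classic.

Lemma normv_ge0 m (w : 'cV[C]_m) : 0 <= normv w.
Proof. exact: bigmax_ge_id. Qed.

Lemma abs_entry_le_normv m (w : 'cV[C]_m) i : abs (w i 0) <= normv w.
Proof. exact: (le_bigmax 0 (fun i => abs (w i 0))). Qed.

Lemma normf_ge0 m (l : 'rV[K]_m) : 0 <= normf l.
Proof. exact: bigmax_ge_id. Qed.

Lemma abs_coef_le_normf m (l : 'rV[K]_m) i : abs (iota (l 0 i)) <= normf l.
Proof. exact: (le_bigmax 0 (fun i => abs (iota (l 0 i)))). Qed.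

Lemma normf_attained m (l : 'rV[K]_m.+1) : exists k, normf l = abs (iota (l 0 k)).
Proof.
have [k _ normf_k] := @eq_bigmax _ _ _ 0 ord0 xpredT (fun i => abs (iota (l 0 i)))
  erefl (fun i _ => abs_ge0 _).
by exists k.
Qed.

Lemma normf_gt0 m (l : 'rV[K]_m) : l != 0 -> 0 < normf l.
Proof.
move=> l_neq0; rewrite lt_def normf_ge0 andbT; apply: contraNneq l_neq0 => normf0.
apply/eqP/rowP => i; apply/(fmorph_inj iota); rewrite !mxE rmorph0.
by apply/(absu_eq0 habs)/le_anti; rewrite abs_ge0 andbT -normf0 abs_coef_le_normf.
Qed.

Lemma lformD m (a b : 'rV[K]_m) w : lform (a + b) w = lform a w + lform b w.
Proof. by rewrite /lform -big_split; apply: eq_bigr => i _; rewrite !mxE rmorphD mulrDl. Qed.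

Lemma lformB m (a b : 'rV[K]_m) w : lform (a - b) w = lform a w - lform b w.
Proof. by rewrite /lform -sumrB; apply: eq_bigr => i _; rewrite !mxE rmorphB mulrBl. Qed.

Lemma lformZ m c (a : 'rV[K]_m) w : lform (c *: a) w = iota c * lform a w.
Proof. by rewrite /lform mulr_sumr; apply: eq_bigr => i _; rewrite !mxE rmorphM mulrA. Qed.

Lemma lformZr m (l : 'rV[K]_m) c w : lform l (c *: w) = c * lform l w.
Proof. by rewrite /lform mulr_sumr; apply: eq_bigr => i _; rewrite mxE mulrCA. Qed.

Lemma lform_delta m (k : 'I_m) w : lform (delta_mx 0 k) w = w k 0.
Proof.
rewrite /lform (bigD1 k) //= mxE !eqxx rmorph1 mul1r big1 ?addr0 // => i /negPf ki.
by rewrite mxE ki andbF rmorph0 mul0r.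
Qed.

Lemma mul_entry_lform m n (A : 'M[K]_(m, n)) w i :
  (map_mx iota A *m w) i 0 = lform (row i A) w.
Proof. by rewrite mxE; apply: eq_bigr => j _; rewrite !mxE. Qed.

Lemma lform_mul m n (l : 'rV[K]_m) (A : 'M[K]_(m, n)) w :
  lform l (map_mx iota A *m w) = lform (l *m A) w.
Proof.
rewrite /lform; under eq_bigr do rewrite mxE big_distrr /=.
rewrite exchange_big /=; apply: eq_bigr => j _; rewrite mxE rmorph_sum big_distrl /=.
by apply: eq_bigr => i _; rewrite !mxE rmorphM mulrA.
Qed.

Lemma normf_delta m (k : 'I_m) : normf (delta_mx 0 k) = 1.
Proof.
apply/le_anti/andP; split.
  apply: bigmax_le => // i _; rewrite mxE.
  by case: (_ && _); rewrite ?rmorph1 ?rmorph0 ?(abs1 habs) ?(abs0 habs).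
by have := abs_coef_le_normf (delta_mx 0 k) k; rewrite mxE !eqxx rmorph1 (abs1 habs).
Qed.

Lemma abs_lform_le m (l : 'rV[K]_m) w : abs (lform l w) <= normf l * normv w.
Proof.
apply: le_trans (abs_sum_le habs _ _) _.
apply: bigmax_le => [|i _]; first by rewrite mulr_ge0 ?normf_ge0 ?normv_ge0.
by rewrite absM ler_pM ?abs_ge0 ?abs_coef_le_normf ?abs_entry_le_normv.
Qed.

Lemma normv_scale_le m c (w : 'cV[C]_m) : normv (c *: w) <= abs c * normv w.
Proof.
apply: bigmax_le => [|i _]; first by rewrite mulr_ge0 ?normv_ge0.
by rewrite mxE absM ler_wpM2l ?abs_entry_le_normv.
Qed.

Lemma normf_row_le_normm m n (A : 'M[K]_(m, n)) i : normf (row i A) <= normm A.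
Proof. exact: (le_bigmax 0 (fun i => normf (row i A))). Qed.

Lemma normm_unitmx_gt0 n (A : 'M[K]_n.+1) : A \in unitmx -> 0 < normm A.
Proof.
move=> A_unit; apply: lt_le_trans (normf_row_le_normm A ord0).
exact/normf_gt0/row_unitmx_neq0.
Qed.

Lemma normv_mul_le m n (A : 'M[K]_(m, n)) w :
  normv (map_mx iota A *m w) <= normm A * normv w.
Proof.
apply: bigmax_le => [|i _]; first by rewrite mulr_ge0 ?normv_ge0 ?bigmax_ge_id.
rewrite mul_entry_lform; apply: le_trans (abs_lform_le _ _) _.
by rewrite ler_wpM2r ?normv_ge0 ?normf_row_le_normm.
Qed.

Lemma normf_mul_le m n (l : 'rV[K]_m) (A : 'M[K]_(m, n)) : normf (l *m A) <= normf l * normm A.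
Proof.
apply: bigmax_le => [|j _]; first by rewrite mulr_ge0 ?normf_ge0 ?bigmax_ge_id.
rewrite mxE rmorph_sum; apply: le_trans (abs_sum_le habs _ _) _.
apply: bigmax_le => [|i _]; first by rewrite mulr_ge0 ?normf_ge0 ?bigmax_ge_id.
rewrite rmorphM absM ler_pM ?abs_ge0 ?abs_coef_le_normf //.
by apply: le_trans (normf_row_le_normm A i); have := abs_coef_le_normf (row i A) j; rewrite mxE.
Qed.

Lemma normfZ m c (l : 'rV[K]_m) : normf (c *: l) = abs (iota c) * normf l.
Proof.
have normfZ_le c' (l' : 'rV[K]_m) : normf (c' *: l') <= abs (iota c') * normf l'.
  apply: bigmax_le => [|i _]; first by rewrite mulr_ge0 ?normf_ge0.
  by rewrite mxE rmorphM absM ler_wpM2l ?abs_coef_le_normf.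
apply/le_anti; rewrite normfZ_le /=.
have [->|c_neq0] := eqVneq c 0; first by rewrite rmorph0 (abs0 habs) mul0r normf_ge0.
have absc_gt0 : 0 < abs (iota c) by rewrite (abs_gt0 habs) ?fmorph_eq0.
rewrite -ler_pdivlMl // -(absV habs) -fmorphV.
by rewrite -[l in normf l <= _](scalerK c_neq0) normfZ_le.
Qed.

Lemma inf_unimod_le m (w : 'cV[C]_m) l : unimodular l -> inf_unimod w <= abs (lform l w).
Proof.
move=> unimod_l; apply: ge_inf; last by exists l.
by exists 0 => _ [l' [_ ->]]; apply: abs_ge0.
Qed.

Lemma inf_unimod_ge m (w : 'cV[C]_m.+1) b :
  (forall l, unimodular l -> b <= abs (lform l w)) -> b <= inf_unimod w.
Proof.
move=> b_le; apply: lb_le_inf => [|_ [l [unimod_l ->]]]; last exact: b_le.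
by exists (abs (lform (delta_mx 0 ord0) w)), (delta_mx 0 ord0); split => //; apply: normf_delta.
Qed.

Lemma hgtE m (w : 'cV[C]_m) : hgt iota abs w = (normv w)^-1 * inf_unimod w.
Proof. by []. Qed.

Lemma inf_unimod_ge0 m (w : 'cV[C]_m.+1) : 0 <= inf_unimod w.
Proof. by apply: inf_unimod_ge => l _; apply: abs_ge0. Qed.

Lemma normf_inf_unimod_le m (v : 'rV[K]_m.+1) w :
  normf v * inf_unimod w <= abs (lform v w).
Proof.
have [k normf_vk] := normf_attained v.
have [vk0|vk_neq0] := eqVneq (v 0 k) 0.
  by rewrite normf_vk vk0 rmorph0 (abs0 habs) mul0r abs_ge0.
have absvk_gt0 : 0 < abs (iota (v 0 k)) by rewrite (abs_gt0 habs) ?fmorph_eq0.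
have unimod : unimodular ((v 0 k)^-1 *: v).
  by rewrite /unimodular -/(normf _) normfZ fmorphV (absV habs) normf_vk mulVf ?gt_eqF.
have := inf_unimod_le w unimod; rewrite lformZ absM fmorphV (absV habs).
by rewrite normf_vk -ler_pdivlMl // mulrC.
Qed.

Lemma normfD_le m (a b : 'rV[K]_m) : normf (a + b) <= Num.max (normf a) (normf b).
Proof.
apply: bigmax_le => [|i _]; first by rewrite le_max normf_ge0.
rewrite mxE rmorphD; apply: le_trans (absuD habs _ _) _.
by rewrite ge_max !le_max !abs_coef_le_normf ?orbT.
Qed.

Section Domination.
Variables (m : nat) (w : 'cV[C]_m).

Definition supported_below k (l : 'rV[K]_m) := forall i : 'I_m, (k <= i)%N -> l 0 i = 0.

Definition dominated_below k := exists2 M : R, 0 < M &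
  forall l, supported_below k l -> normf l <= M * abs (lform l w).

Lemma dominated_below0 : dominated_below 0.
Proof.
exists 1 => // l l_supp; apply: le_trans (_ : 0 <= _); last by rewrite mul1r abs_ge0.
by apply: bigmax_le => // i _; rewrite l_supp // rmorph0 (abs0 habs).
Qed.

Lemma supported_below_succ k (lt_km : (k < m)%N) l : supported_below k.+1 l ->
  supported_below k (l - l 0 (Ordinal lt_km) *: delta_mx 0 (Ordinal lt_km)).
Proof.
move=> l_supp i le_ki; rewrite !mxE; have [->|i_neq_k] := eqVneq i (Ordinal lt_km).
  by rewrite !eqxx mulr1 subrr.
rewrite andbF mulr0 subr0 l_supp // ltn_neqAle le_ki andbT.
by apply: contra i_neq_k => /eqP ki; apply/eqP/val_inj.
Qed.

Lemma dominated_belowS k (lt_km : (k < m)%N) d : 0 < d ->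
  (forall a, supported_below k a -> d <= abs (w (Ordinal lt_km) 0 + lform a w)) ->
  dominated_below k -> dominated_below k.+1.
Proof.
set kk := Ordinal lt_km; move=> d_gt0 dist_ge [M M_gt0 domM].
set D := abs (w kk 0); have D_ge0 : 0 <= D by apply: abs_ge0.
have MD_ge0 : 0 <= M * D := mulr_ge0 (ltW M_gt0) D_ge0.
exists (M + M * D / d + d^-1).
  have : 0 < d^-1 by rewrite invr_gt0.
  by have := divr_ge0 MD_ge0 (ltW d_gt0); lra.
move=> l l_supp; set t := l 0 kk; set a := l - t *: delta_mx 0 kk.
have a_supp : supported_below k a := supported_below_succ lt_km l_supp.
have lformE : lform l w = lform a w + iota t * w kk 0.
  by rewrite lformB lformZ lform_delta subrK.
set X := abs (lform l w); set T := abs (iota t).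
have X_ge0 : 0 <= X by apply: abs_ge0.
have T_le : T <= X / d.
  rewrite ler_pdivlMr //.
  have [t0|t_neq0] := eqVneq t 0; first by rewrite /T t0 rmorph0 (abs0 habs) mul0r.
  have lform_l : lform l w = iota t * (w kk 0 + lform (t^-1 *: a) w).
    by rewrite lformE lformZ fmorphV mulrDr mulrA mulfV ?fmorph_eq0 // mul1r addrC.
  by rewrite /X lform_l absM ler_wpM2l ?abs_ge0 // dist_ge // => i le_ki; rewrite mxE a_supp ?mulr0.
have normf_a : normf a <= M * (X + T * D).
  apply: le_trans (domM _ a_supp) _; rewrite ler_pM2l //.
  have -> : lform a w = lform l w - iota t * w kk 0 by rewrite lformE addrK.
  apply: le_trans (absB habs _ _) _; rewrite absM ge_max lerDl lerDr X_ge0 andbT.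
  by rewrite mulr_ge0 ?abs_ge0.
have normf_l : normf l <= Num.max (normf a) T.
  have -> : l = a + t *: delta_mx 0 kk by rewrite subrK.
  by apply: le_trans (normfD_le _ _) _; rewrite normfZ normf_delta mulr1.
have MTD_le : M * (T * D) <= M * D * (X / d).
  by rewrite [T * D]mulrC [M * (D * T)]mulrA ler_wpM2l.
have MX_ge0 : 0 <= M * X := mulr_ge0 (ltW M_gt0) X_ge0.
have Xd_ge0 : 0 <= X / d := divr_ge0 X_ge0 (ltW d_gt0).
have MDXd_ge0 : 0 <= M * D * (X / d) := mulr_ge0 MD_ge0 Xd_ge0.
have -> : (M + M * D / d + d^-1) * X = M * X + M * D * (X / d) + X / d by ring.
apply: le_trans normf_l _; rewrite ge_max; apply/andP; split; last by lra.
by apply: le_trans normf_a _; rewrite mulrDr; lra.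
Qed.

End Domination.

Definition indep_entries m (w : 'cV[C]_m) := forall a : 'rV[K]_m, lform a w = 0 -> a = 0.

Section Completeness.
Hypothesis K_complete : forall u : nat -> K, cauchy_seq (fun x => abs (iota x)) u ->
  exists l : K, converges_to (fun x => abs (iota x)) u l.

Lemma rows_complete m (u : nat -> 'rV[K]_m) :
  cauchy_seq normf u -> exists b, converges_to normf u b.
Proof.
move=> cauchy_u.
have coef_cauchy i : cauchy_seq (fun x => abs (iota x)) (fun j => u j 0 i).
  move=> e e_gt0; have [N cauchyN] := cauchy_u e e_gt0; exists N => j j' le_Nj le_Nj'.
  apply: le_lt_trans (cauchyN j j' le_Nj le_Nj').
  by have := abs_coef_le_normf (u j - u j') i; rewrite !mxE.
have [b cvg_b] := choice (fun i => K_complete (coef_cauchy i)).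
exists (\row_i b i) => e e_gt0.
have [N cvgN] := choice (fun i => cvg_b i e e_gt0).
exists (\max_(i < m) N i)%N => j le_j.
apply: bigmax_lt => // i _; rewrite !mxE; apply: cvgN.
by apply: leq_trans le_j; apply: leq_bigmax.
Qed.

Section SpanClosed.
Variables (m : nat) (w : 'cV[C]_m).

Lemma supported_below_limit k (u : nat -> 'rV[K]_m) b : converges_to normf u b ->
  (forall j, supported_below k (u j)) -> supported_below k b.
Proof.
move=> cvg_b supp_u i le_ki; apply/(fmorph_inj iota); rewrite rmorph0.
apply: (abs_lt_all_eq0 habs) => e e_gt0; have [N cvgN] := cvg_b e e_gt0.
apply: le_lt_trans (cvgN N (leqnn N)).
by have := abs_coef_le_normf (u N - b) i; rewrite !mxE supp_u // sub0r rmorphN (absN habs).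
Qed.

Lemma lform_converges (u : nat -> 'rV[K]_m) b : converges_to normf u b ->
  converges_to abs (fun j => lform (u j) w) (lform b w).
Proof.
move=> cvg_b e e_gt0.
have W_gt0 : 0 < normv w + 1 by rewrite ltr_wpDl ?normv_ge0.
have [N cvgN] := cvg_b _ (divr_gt0 e_gt0 W_gt0); exists N => j le_Nj.
rewrite -lformB; apply: le_lt_trans (abs_lform_le _ _) _.
apply: le_lt_trans (_ : e / (normv w + 1) * normv w < e).
  by rewrite ler_wpM2r ?normv_ge0 ?ltW ?cvgN.
by rewrite mulrAC ltr_pdivrMr // ltr_pM2l // ltrDl.
Qed.

Lemma dominated_cauchy k (u : nat -> 'rV[K]_m) : dominated_below w k ->
  (forall j, supported_below k (u j)) ->
  cauchy_seq abs (fun j => lform (u j) w) -> cauchy_seq normf u.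
Proof.
move=> [M M_gt0 domM] supp_u cauchy_u e e_gt0.
have [N cauchyN] := cauchy_u _ (divr_gt0 e_gt0 M_gt0); exists N => j j' le_Nj le_Nj'.
have supp_diff : supported_below k (u j - u j') by move=> i le_ki; rewrite !mxE !supp_u ?subrr.
apply: le_lt_trans (domM _ supp_diff) _.
by rewrite lformB mulrC -ltr_pdivlMr // cauchyN.
Qed.

Lemma span_closed k (u : nat -> 'rV[K]_m) z : dominated_below w k ->
  (forall j, supported_below k (u j)) -> converges_to abs (fun j => lform (u j) w) z ->
  exists2 b, supported_below k b & lform b w = z.
Proof.
move=> dom supp_u cvg_z.
have [b cvg_b] := rows_complete (dominated_cauchy dom supp_u (converges_cauchy habs cvg_z)).
exists b; first exact: supported_below_limit cvg_b supp_u.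
exact: (converges_to_unique habs (lform_converges cvg_b) cvg_z).
Qed.

Lemma dist_span_gt0 k (lt_km : (k < m)%N) : indep_entries w -> dominated_below w k ->
  exists2 d : R, 0 < d &
    forall a, supported_below k a -> d <= abs (w (Ordinal lt_km) 0 + lform a w).
Proof.
set kk := Ordinal lt_km; move=> indep dom; apply: contrapT => no_dist.
have near j : exists a, supported_below k a /\ abs (w kk 0 + lform a w) < (j.+1%:R)^-1.
  apply: contrapT => not_near; apply: no_dist; exists (j.+1%:R)^-1; first by rewrite invr_gt0.
  by move=> a supp_a; rewrite leNgt; apply/negP => lt_a; apply: not_near; exists a.
have [u u_near] := choice near.
have cvg_u : converges_to abs (fun j => lform (u j) w) (- w kk 0).
  move=> e e_gt0; have [N ltN] := inv_succ_lt_eventually e_gt0; exists N => j le_Nj.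
  by rewrite opprK addrC; apply: lt_trans (proj2 (u_near j)) (ltN j le_Nj).
have [b supp_b lform_b] := span_closed dom (fun j => proj1 (u_near j)) cvg_u.
have lform_b_delta : lform (b + delta_mx 0 kk) w = 0.
  by rewrite lformD lform_delta lform_b addNr.
have /rowP/(_ kk) := indep _ lform_b_delta.
by rewrite !mxE supp_b // !eqxx add0r => /eqP; rewrite oner_eq0.
Qed.

Lemma indep_dominated : indep_entries w ->
  exists2 M : R, 0 < M & forall l, normf l <= M * abs (lform l w).
Proof.
move=> indep; have dom_all k : (k <= m)%N -> dominated_below w k.
  elim: k => [_|k IH lt_km]; first exact: dominated_below0.
  have [d d_gt0 dist_ge] := dist_span_gt0 lt_km indep (IH (ltnW lt_km)).
  exact: dominated_belowS d_gt0 dist_ge (IH (ltnW lt_km)).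
have [M M_gt0 domM] := dom_all m (leqnn m).
by exists M => // l; apply: domM => i; rewrite leqNgt ltn_ord.
Qed.

End SpanClosed.

Lemma inf_unimod_gt0 m (w : 'cV[C]_m.+1) : indep_entries w -> 0 < inf_unimod w.
Proof.
move=> /indep_dominated[M M_gt0 domM].
apply: lt_le_trans (inf_unimod_ge (b := M^-1) _); first by rewrite invr_gt0.
move=> l normf_l; rewrite -(ler_pM2l M_gt0) mulfV ?gt_eqF //.
by rewrite -[1]normf_l domM.
Qed.

End Completeness.

Section Automorphy.
Variables (xi : C) (n : nat) (gamma : 'M[K]_n.+1).
Hypotheses (xi_neq0 : xi != 0) (gamma_unit : gamma \in unitmx).
Implicit Type w : 'cV[C]_n.+1.

Let absxi_gt0 : 0 < abs xi. Proof. by rewrite (abs_gt0 habs). Qed.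

Local Notation hgt := (hgt iota abs).
Local Notation jfac := (jfac iota xi gamma).
Local Notation gact := (gact iota xi gamma).
Local Notation Omega w := (Omega iota xi w).

Lemma jfac_coef_gt0 : 0 < abs xi / normf (row ord_max gamma).
Proof. by rewrite divr_gt0 ?normf_gt0 ?row_unitmx_neq0. Qed.

Lemma jfacE w : jfac w = xi^-1 * lform (row ord_max gamma) w.
Proof. by rewrite /jfac mul_entry_lform. Qed.

Lemma jfac_neq0 w : Omega w -> jfac w != 0.
Proof.
case=> _ indep; rewrite jfacE mulf_eq0 invr_eq0 negb_or xi_neq0 /=.
by apply: contraNneq (row_unitmx_neq0 ord_max gamma_unit) => /indep ->.
Qed.

Lemma normv_Omega_ge w : Omega w -> abs xi <= normv w.
Proof. by case=> <- _; apply: abs_entry_le_normv. Qed.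

Lemma gact_last w : jfac w != 0 -> gact w ord_max 0 = xi.
Proof.
move=> jfac_neq0; rewrite /gact mxE.
have -> : (map_mx iota gamma *m w) ord_max 0 = xi * jfac w by rewrite mulrA mulfV ?mul1r.
by rewrite mulrC -mulrA mulfV ?mulr1.
Qed.

Lemma jfac_scaledE w : abs xi / normf (row ord_max gamma) * abs (jfac w)
  = (normf (row ord_max gamma))^-1 * abs (lform (row ord_max gamma) w).
Proof.
by rewrite jfacE absM (absV habs) mulrCA !mulrA mulVf ?gt_eqF // mul1r.
Qed.

Lemma inf_unimod_le_jfac w :
  inf_unimod w <= abs xi / normf (row ord_max gamma) * abs (jfac w).
Proof.
have normf_gt0' := normf_gt0 (row_unitmx_neq0 ord_max gamma_unit).
by rewrite jfac_scaledE ler_pdivlMl // normf_inf_unimod_le.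
Qed.

Lemma jfac_le_normv w : abs xi / normf (row ord_max gamma) * abs (jfac w) <= normv w.
Proof.
have normf_gt0' := normf_gt0 (row_unitmx_neq0 ord_max gamma_unit).
by rewrite jfac_scaledE ler_pdivrMl // abs_lform_le.
Qed.

Lemma normv_gact_le w : normv (gact w) <= (abs (jfac w))^-1 * (normm gamma * normv w).
Proof.
apply: le_trans (normv_scale_le _ _) _.
by rewrite (absV habs) ler_wpM2l ?invr_ge0 ?normv_mul_le.
Qed.

Lemma inf_unimod_gact_ge w :
  (abs (jfac w))^-1 * (normm (invmx gamma))^-1 * inf_unimod w <= inf_unimod (gact w).
Proof.
have normm_inv_gt0 : 0 < normm (invmx gamma).
  by rewrite normm_unitmx_gt0 ?unitmx_inv.
apply: inf_unimod_ge => l normf_l.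
have -> : lform l (gact w) = (jfac w)^-1 * lform (l *m gamma) w.
  by rewrite lformZr lform_mul.
rewrite (absM (jfac w)^-1) (absV habs) -mulrA ler_wpM2l ?invr_ge0 //.
apply: le_trans (normf_inf_unimod_le _ _); rewrite ler_wpM2r //.
  exact: inf_unimod_ge0.
have normf_l1 : normf l = 1 := normf_l.
have := normf_mul_le (l *m gamma) (invmx gamma); rewrite mulmxK // normf_l1.
by rewrite -[_^-1]mul1r ler_pdivrMr.
Qed.

Lemma normv_Omega_gt0 w : Omega w -> 0 < normv w.
Proof. by move=> Ow; apply: lt_le_trans absxi_gt0 (normv_Omega_ge Ow). Qed.

Lemma hgt_le_jfac w :
  hgt w <= abs xi / normf (row ord_max gamma) * abs (jfac w) * (normv w)^-1.
Proof. by rewrite hgtE mulrC ler_wpM2r ?invr_ge0 ?normv_ge0 ?inf_unimod_le_jfac. Qed.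

Lemma jfac_scaled_le1 w : Omega w ->
  abs xi / normf (row ord_max gamma) * abs (jfac w) * (normv w)^-1 <= 1.
Proof. by move=> Ow; rewrite ler_pdivrMr ?mul1r ?jfac_le_normv ?normv_Omega_gt0. Qed.

(* The only use of completeness: it makes h(w) > 0, whereas (hgt w)^-1 = 0 when h(w) = 0. *)
Lemma normv_gact_le_hgt : (forall u : nat -> K, cauchy_seq (fun x => abs (iota x)) u ->
    exists l : K, converges_to (fun x => abs (iota x)) u l) ->
  forall w, Omega w ->
  normv (gact w) <= abs xi / normf (row ord_max gamma) * normm gamma * (hgt w)^-1.
Proof.
move=> K_complete w Ow; set c1 := abs xi / _.
have I_gt0 := inf_unimod_gt0 K_complete (proj2 Ow).
have j_gt0 : 0 < abs (jfac w) by rewrite (abs_gt0 habs) jfac_neq0.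
have jinv_le : (abs (jfac w))^-1 <= c1 / inf_unimod w.
  by rewrite ler_pdivlMr // mulrC ler_pdivrMr // inf_unimod_le_jfac.
apply: le_trans (normv_gact_le w) _.
have -> : c1 * normm gamma * (hgt w)^-1 = c1 / inf_unimod w * (normm gamma * normv w).
  by rewrite hgtE invfM invrK; ring.
by apply: ler_wpM2r jinv_le; rewrite mulr_ge0 ?normv_ge0 ?ltW ?normm_unitmx_gt0.
Qed.

Lemma hgt_gact_ge w : Omega w ->
  (normm gamma * normm (invmx gamma))^-1 * hgt w <= hgt (gact w).
Proof.
move=> Ow; have j_neq0 := jfac_neq0 Ow.
have j_gt0 : 0 < abs (jfac w) by rewrite (abs_gt0 habs).
have N_gt0 := normv_Omega_gt0 Ow.
have G_gt0 : 0 < normm gamma by rewrite normm_unitmx_gt0.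
have H_gt0 : 0 < normm (invmx gamma) by rewrite normm_unitmx_gt0 ?unitmx_inv.
have N'_gt0 : 0 < normv (gact w).
  by apply: lt_le_trans absxi_gt0 _; rewrite -{1}(gact_last j_neq0) abs_entry_le_normv.
have N'inv_ge : ((abs (jfac w))^-1 * (normm gamma * normv w))^-1 <= (normv (gact w))^-1.
  by rewrite lef_pV2 ?posrE ?normv_gact_le // !mulr_gt0 ?invr_gt0.
have -> : (normm gamma * normm (invmx gamma))^-1 * hgt w = ((abs (jfac w))^-1 *
    (normm gamma * normv w))^-1 * ((abs (jfac w))^-1 * (normm (invmx gamma))^-1 * inf_unimod w).
  by rewrite hgtE; field; rewrite !gt_eqF.
rewrite hgtE; apply: ler_pM N'inv_ge (inf_unimod_gact_ge w).
  by apply/ltW; rewrite invr_gt0 !mulr_gt0 ?invr_gt0.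
by rewrite !mulr_ge0 ?inf_unimod_ge0 // invr_ge0 ltW.
Qed.

End Automorphy.
End Forms.

Theorem lemma3p5 (R : realType) (K : fieldType) (C : closedFieldType)
    (iota : {rmorphism K -> C}) (abs : C -> R)
    (Hset : function_field_setting iota abs)
    (xi : C) (Hxi : xi != 0) (n : nat)
    (gamma : 'M[K]_n.+1) (Hgamma : gamma \in unitmx) :
  exists c1 c2 c3 : R, 0 < c1 /\ 0 < c2 /\ 0 < c3 /\
    forall omega : 'cV[C]_n.+1, Omega iota xi omega ->
      [/\ hgt iota abs omega <= c1 * abs (jfac iota xi gamma omega) * (normv abs omega)^-1,
          c1 * abs (jfac iota xi gamma omega) * (normv abs omega)^-1 <= 1,
          normv abs (gact iota xi gamma omega) <= c2 * (hgt iota abs omega)^-1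
        & hgt iota abs (gact iota xi gamma omega) >= c3 * hgt iota abs omega].
Proof.
have habs := setting_ultrametric Hset.
have c1_gt0 := jfac_coef_gt0 iota habs Hxi Hgamma.
have G_gt0 := normm_unitmx_gt0 iota habs Hgamma.
have H_gt0 : 0 < normm iota abs (invmx gamma).
  by rewrite (normm_unitmx_gt0 iota habs) ?unitmx_inv.
exists (abs xi / normf iota abs (row ord_max gamma)),
  (abs xi / normf iota abs (row ord_max gamma) * normm iota abs gamma),
  (normm iota abs gamma * normm iota abs (invmx gamma))^-1.
split; [by [] | split; [exact: mulr_gt0 | split; [by rewrite invr_gt0 mulr_gt0 |]]].
move=> omega Homega; split.
- exact: hgt_le_jfac.
- exact: jfac_scaled_le1.
- exact: normv_gact_le_hgt (K_complete Hset) _ Homega.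
- exact: hgt_gact_ge.
Qed.
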